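(* Let $X_r$ be a Dynkin diagram of finite type with dual Coxeter number $h^\vee$ and involution $\omega$. (i) In the abelian group $\mathcal{T}_0(X_r)$: $T^{(a)}(u+h^\vee)=T^{(\omega(a))}(u)^{-1}$ and $T^{(a)}(u+2h^\vee)=T^{(a)}(u)$ for all $a\in I$, $u\in\frac1t\mathbb{Z}$. (ii) In the abelian group $\mathcal{Y}_0(X_r)$: $Y^{(a)}(u+h^\vee)=Y^{(\omega(a))}(u)^{-1}$ and $Y^{(a)}(u+2h^\vee)=Y^{(a)}(u)$ for all $a\in I$, $u\in\frac1t\mathbb{Z}$.
   Context: Enumeration of $I=\{1,\dots,r\}$: $A_r$: chain; $B_r$: chain with double bond between $r-1,r$, $\alpha_r$ short; $C_r$: same, $\alpha_r$ long, others short; $D_r$: chain $1-\cdots-(r-2)$, $r-1,r$ joined to $r-2$; $E_6$: chain $1-2-3-5-6$, $4$ joined to $3$; $E_7$: chain $1-\cdots-6$, $7$ joined to $3$; $E_8$: chain $1-\cdots-7$, $8$ joined to $5$; $F_4$: chain $1-2-3-4$, double bond between $2,3$, $\alpha_1,\alpha_2$ long; $G_2$: $\alpha_1$ long. $C$ is the Cartan matrix; $t=1$ (simply laced), $2$ ($B_r,C_r,F_4$), $3$ ($G_2$). $h^\vee$: $A_r$: $r+1$, $B_r$: $2r-1$, $C_r$: $r+1$, $D_r$: $2r-2$, $E_6$: 12, $E_7$: 18, $E_8$: 30, $F_4$: 9, $G_2$: 4. $\omega$ is the identity except: $\omega(a)=r+1-a$ for $A_r$; $\omega$ swaps $r-1,r$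 for $D_r$ with $r$ odd; $\omega$ swaps $1\leftrightarrow6$, $2\leftrightarrow5$ for $E_6$. $\mathcal{T}_0(X_r)$ is the abelian group (written multiplicatively) generated by $T^{(a)}(u)$ ($a\in I$, $u\in\frac1t\mathbb{Z}$) with relations (with $T^{(0)}(u)=1$): simply laced: $T^{(a)}(u-1)T^{(a)}(u+1)=\prod_{b:C_{ab}=-1}T^{(b)}(u)$; $B_r$: $T^{(a)}(u-1)T^{(a)}(u+1)=T^{(a-1)}(u)T^{(a+1)}(u)$ ($a\le r-2$), $T^{(r-1)}(u-1)T^{(r-1)}(u+1)=T^{(r-2)}(u)T^{(r)}(u)$, $T^{(r)}(u-\frac12)T^{(r)}(u+\frac12)=T^{(r-1)}(u-\frac12)T^{(r-1)}(u+\frac12)$; $C_r$: $T^{(a)}(u-\frac12)T^{(a)}(u+\frac12)=T^{(a-1)}(u)T^{(a+1)}(u)$ ($a\le r-2$), $T^{(r-1)}(u-\frac12)T^{(r-1)}(u+\frac12)=T^{(r-2)}(u)T^{(r)}(u-\frac12)T^{(r)}(u+\frac12)$, $T^{(r)}(u-1)T^{(r)}(u+1)=T^{(r-1)}(u)$; $F_4$: $T^{(1)}(u-1)T^{(1)}(u+1)=T^{(2)}(u)$, $T^{(2)}(u-1)T^{(2)}(u+1)=T^{(1)}(u)T^{(3)}(u)$, $T^{(3)}(u-\frac12)T^{(3)}(u+\frac12)=T^{(2)}(u-\frac12)T^{(2)}(u+\frac12)T^{(4)}(u)$, $T^{(4)}(u-\frac12)T^{(4)}(u+\frac12)=T^{(3)}(u)$;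 $G_2$: $T^{(1)}(u-1)T^{(1)}(u+1)=T^{(2)}(u)$, $T^{(2)}(u-\frac13)T^{(2)}(u+\frac13)=T^{(1)}(u-\frac23)T^{(1)}(u)T^{(1)}(u+\frac23)$. $\mathcal{Y}_0(X_r)$ is the abelian group generated by $Y^{(a)}(u)$ with relations (with $Y^{(0)}(u)=1$): simply laced: $Y^{(a)}(u-1)Y^{(a)}(u+1)=\prod_{b:C_{ab}=-1}Y^{(b)}(u)$; $B_r$: $Y^{(a)}(u-1)Y^{(a)}(u+1)=Y^{(a-1)}(u)Y^{(a+1)}(u)$ ($a\le r-2$), $Y^{(r-1)}(u-1)Y^{(r-1)}(u+1)=Y^{(r-2)}(u)Y^{(r)}(u-\frac12)Y^{(r)}(u+\frac12)$, $Y^{(r)}(u-\frac12)Y^{(r)}(u+\frac12)=Y^{(r-1)}(u)$; $C_r$: $Y^{(a)}(u-\frac12)Y^{(a)}(u+\frac12)=Y^{(a-1)}(u)Y^{(a+1)}(u)$ ($a\le r-2$), $Y^{(r-1)}(u-\frac12)Y^{(r-1)}(u+\frac12)=Y^{(r-2)}(u)Y^{(r)}(u)$, $Y^{(r)}(u-1)Y^{(r)}(u+1)=Y^{(r-1)}(u-\frac12)Y^{(r-1)}(u+\frac12)$; $F_4$: $Y^{(1)}(u-1)Y^{(1)}(u+1)=Y^{(2)}(u)$, $Y^{(2)}(u-1)Y^{(2)}(u+1)=Y^{(1)}(u)Y^{(3)}(u-\frac12)Y^{(3)}(u+\frac12)$, $Y^{(3)}(u-\frac12)Y^{(3)}(u+\frac12)=Y^{(2)}(u)Y^{(4)}(u)$,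 $Y^{(4)}(u-\frac12)Y^{(4)}(u+\frac12)=Y^{(3)}(u)$; $G_2$: $Y^{(1)}(u-1)Y^{(1)}(u+1)=Y^{(2)}(u-\frac23)Y^{(2)}(u)Y^{(2)}(u+\frac23)$, $Y^{(2)}(u-\frac13)Y^{(2)}(u+\frac13)=Y^{(1)}(u)$. *)

From mathcomp Require Import all_boot all_algebra.
Set Implicit Arguments. Unset Strict Implicit. Unset Printing Implicit Defensive.
Import GRing.Theory.
Local Open Scope ring_scope.

Inductive Dynkin := TA of nat | TB of nat | TC of nat | TD of nat
                  | TE6 | TE7 | TE8 | TF4 | TG2.

Definition rank (d : Dynkin) : nat :=
  match d with TA r | TB r | TC r | TD r => r
  | TE6 => 6 | TE7 => 7 | TE8 => 8 | TF4 => 4 | TG2 => 2 end.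

Definition valid_dynkin (d : Dynkin) : bool :=
  match d with TA r => (1 <= r)%N | TB r => (2 <= r)%N | TC r => (2 <= r)%N
  | TD r => (4 <= r)%N | _ => true end.

Definition tnum (d : Dynkin) : nat :=
  match d with TB _ | TC _ | TF4 => 2 | TG2 => 3 | _ => 1 end.

Definition hdual (d : Dynkin) : nat :=
  match d with TA r => r.+1 | TB r => (2 * r - 1)%N | TC r => r.+1
  | TD r => (2 * r - 2)%N | TE6 => 12 | TE7 => 18 | TE8 => 30
  | TF4 => 9 | TG2 => 4 end.

Definition omega (d : Dynkin) (a : nat) : nat :=
  match d with
  | TA r => (r.+1 - a)%N
  | TD r => if odd r then (if a == r.-1 then r else if a == r then r.-1 else a)
            else a
  | TE6 => match a with 1 => 6%N | 2 => 5%N | 5 => 2%N | 6 => 1%N | _ => a end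
  | _ => a end.

(* edges of the simply laced diagrams (C_ab = -1 iff {a,b} is an edge) *)
Definition sl_edges (d : Dynkin) : seq (nat * nat) :=
  match d with
  | TA r => [seq (i, i.+1) | i <- iota 1 r.-1]
  | TD r => [seq (i, i.+1) | i <- iota 1 (r - 3)] ++ [:: (r - 2, r - 1); (r - 2, r)]%N
  | TE6 => [:: (1, 2); (2, 3); (3, 5); (5, 6); (3, 4)]%N
  | TE7 => [seq (i, i.+1) | i <- iota 1 5] ++ [:: (3, 7)]%N
  | TE8 => [seq (i, i.+1) | i <- iota 1 6] ++ [:: (5, 8)]%N
  | _ => [::] end.

Definition adj (d : Dynkin) (a b : nat) : bool :=
  ((a, b) \in sl_edges d) || ((b, a) \in sl_edges d).

(* The spectral parameter u in (1/t)Z is encoded by k : int with u = k / t.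
   The abelian groups are written additively (product -> sum, 1 -> 0,
   inverse -> opposite).  F a k stands for T^{(a)}(k/t) (resp. Y^{(a)}(k/t)). *)

(* convention T^{(0)}(u) = 1 *)
Definition Fz (G : zmodType) (F : nat -> int -> G) (a : nat) (k : int) : G :=
  if a == 0%N then 0 else F a k.

Definition T_rel (d : Dynkin) (G : zmodType) (T : nat -> int -> G)
    (a : nat) (k : int) : Prop :=
  match d with
  | TB r =>
      if (a <= r - 2)%N then T a (k - 2) + T a (k + 2) = Fz T a.-1 k + T a.+1 k
      else if a == r.-1 then T a (k - 2) + T a (k + 2) = Fz T (r - 2) k + T r k
      else T r (k - 1) + T r (k + 1) = T r.-1 (k - 1) + T r.-1 (k + 1)
  | TC r =>
      if (a <= r - 2)%N then T a (k - 1) + T a (k + 1) = Fz T a.-1 k + T a.+1 k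
      else if a == r.-1 then
        T a (k - 1) + T a (k + 1) = Fz T (r - 2) k + T r (k - 1) + T r (k + 1)
      else T r (k - 2) + T r (k + 2) = T r.-1 k
  | TF4 =>
      match a with
      | 1 => T 1%N (k - 2) + T 1%N (k + 2) = T 2%N k
      | 2 => T 2%N (k - 2) + T 2%N (k + 2) = T 1%N k + T 3%N k
      | 3 => T 3%N (k - 1) + T 3%N (k + 1) = T 2%N (k - 1) + T 2%N (k + 1) + T 4%N k
      | _ => T 4%N (k - 1) + T 4%N (k + 1) = T 3%N k
      end
  | TG2 =>
      match a with
      | 1 => T 1%N (k - 3) + T 1%N (k + 3) = T 2%N k
      | _ => T 2%N (k - 1) + T 2%N (k + 1) = T 1%N (k - 2) + T 1%N k + T 1%N (k + 2)
      end
  | _ => T a (k - 1) + T a (k + 1) = \sum_(b <- iota 1 (rank d) | adj d a b) T b k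
  end.

Definition Y_rel (d : Dynkin) (G : zmodType) (Y : nat -> int -> G)
    (a : nat) (k : int) : Prop :=
  match d with
  | TB r =>
      if (a <= r - 2)%N then Y a (k - 2) + Y a (k + 2) = Fz Y a.-1 k + Y a.+1 k
      else if a == r.-1 then
        Y a (k - 2) + Y a (k + 2) = Fz Y (r - 2) k + Y r (k - 1) + Y r (k + 1)
      else Y r (k - 1) + Y r (k + 1) = Y r.-1 k
  | TC r =>
      if (a <= r - 2)%N then Y a (k - 1) + Y a (k + 1) = Fz Y a.-1 k + Y a.+1 k
      else if a == r.-1 then Y a (k - 1) + Y a (k + 1) = Fz Y (r - 2) k + Y r k
      else Y r (k - 2) + Y r (k + 2) = Y r.-1 (k - 1) + Y r.-1 (k + 1)
  | TF4 =>
      match a with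
      | 1 => Y 1%N (k - 2) + Y 1%N (k + 2) = Y 2%N k
      | 2 => Y 2%N (k - 2) + Y 2%N (k + 2) = Y 1%N k + Y 3%N (k - 1) + Y 3%N (k + 1)
      | 3 => Y 3%N (k - 1) + Y 3%N (k + 1) = Y 2%N k + Y 4%N k
      | _ => Y 4%N (k - 1) + Y 4%N (k + 1) = Y 3%N k
      end
  | TG2 =>
      match a with
      | 1 => Y 1%N (k - 3) + Y 1%N (k + 3) = Y 2%N (k - 2) + Y 2%N k + Y 2%N (k + 2)
      | _ => Y 2%N (k - 1) + Y 2%N (k + 1) = Y 1%N k
      end
  | _ => Y a (k - 1) + Y a (k + 1) = \sum_(b <- iota 1 (rank d) | adj d a b) Y b k
  end.

Definition is_T_system (d : Dynkin) (G : zmodType) (T : nat -> int -> G) : Prop :=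
  forall (a : nat) (k : int), (1 <= a <= rank d)%N -> T_rel d T a k.

Definition is_Y_system (d : Dynkin) (G : zmodType) (Y : nat -> int -> G) : Prop :=
  forall (a : nat) (k : int), (1 <= a <= rank d)%N -> Y_rel d Y a k.

(* Along a chain of nodes the relations form a discrete wave equation, so every
   node of the chain is a sum of shifts of its first node ([string_sum]).  The
   shape of the far end of the diagram turns this into a reflection condition:
   for A_r the node beyond the end vanishes, giving T^(a)(u + h) = -T^(r+1-a)(u)
   directly; for B_r and C_r the end relations force the first node (or the end
   node) to be antiperiodic; for D_r, merging the two leaves of the fork into one
   node gives a chain again, and comparing it with the explicit solution written
   in terms of each leaf shows that the leaves are antiperiodic or exchanged by
   the shift, according to the parity of r.  For E, F and G the half-period
   identity at each node is a fixed integer combination of shifted defining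
   relations, checked by computation.  Applying the half-period identity twice
   and using that omega is an involution gives the period. *)

From mathcomp Require Import all_boot all_algebra.
From mathcomp Require Import ring zify.
Import GRing.Theory.
Local Open Scope ring_scope.
Set Implicit Arguments. Unset Strict Implicit. Unset Printing Implicit Defensive.

Section StringSum.
Variable G : zmodType.
Implicit Types (g : int -> G) (s c : int) (n : nat).

Definition string_sum g s n c : G :=
  \sum_(j < n) g (c + s * (2 * j%:Z - n%:Z + 1)).

Lemma string_sum0 g s c : string_sum g s 0 c = 0.
Proof. by rewrite /string_sum big_ord0. Qed.

Lemma string_sumSl g s n c :
  string_sum g s n.+1 c = g (c - s * n%:Z) + string_sum g s n (c + s).
Proof.
rewrite /string_sum big_ord_recl; congr (_ + _).
  by congr g; rewrite /= intS; ring.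
apply: eq_bigr => j _; congr g.
by rewrite /= /bump /= add1n !intS; ring.
Qed.

Lemma string_sumSr g s n c :
  string_sum g s n.+1 c = string_sum g s n (c - s) + g (c + s * n%:Z).
Proof.
rewrite /string_sum big_ord_recr; congr (_ + _).
  by apply: eq_bigr => j _; congr g; rewrite /= intS; ring.
by congr g; rewrite /= intS; ring.
Qed.

Lemma string_sum_rec g s n c :
  string_sum g s n.+2 c =
  string_sum g s n.+1 (c - s) + string_sum g s n.+1 (c + s) - string_sum g s n c.
Proof.
rewrite string_sumSl [string_sum g s n.+1 (c - s)]string_sumSl subrK.
rewrite (addrAC _ (string_sum g s n.+1 (c + s))) addrK.
by congr (_ + _); congr g; rewrite intS; ring.
Qed.

Lemma string_sum_cat g s n1 n2 c :
  string_sum g s (n1 + n2) c =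
  string_sum g s n1 (c - s * n2%:Z) + string_sum g s n2 (c + s * n1%:Z).
Proof.
elim: n2 c => [|n2 IH] c; first by rewrite addn0 string_sum0 addr0 mulr0 subr0.
rewrite addnS string_sumSr IH string_sumSr addrA; congr (_ + _ + _).
- by congr (string_sum _ _ _ _); rewrite intS; ring.
- by congr (string_sum _ _ _ _); ring.
- by congr g; rewrite PoszD; ring.
Qed.

Lemma string_sum_antiperiodic g s n N c :
  (forall j, g (j + N) = - g j) -> string_sum g s n (c + N) = - string_sum g s n c.
Proof.
move=> gN; rewrite /string_sum -sumrN; apply: eq_bigr => j _.
by rewrite -gN; congr g; ring.
Qed.

Lemma antiperiodic_of_reflection g e :
  (forall k, g (k - e) + g (k + e) = 0) -> forall j, g (j + (e + e)) = - g j.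
Proof.
move=> ge j; have := ge (j + e); rewrite addrK addrA => /eqP.
by rewrite addr_eq0 => /eqP ->; rewrite opprK.
Qed.

Definition chain_rel (x : nat -> int -> G) s (m : nat) :=
  forall a k, (1 <= a <= m)%N -> x a (k - s) + x a (k + s) = x a.-1 k + x a.+1 k.

Lemma chain_unique (x y : nat -> int -> G) s m :
  chain_rel x s m -> chain_rel y s m ->
  (forall k, x m k = y m k) -> (forall k, x m.+1 k = y m.+1 k) ->
  forall a, (a <= m.+1)%N -> forall k, x a k = y a k.
Proof.
move=> chain_x chain_y xym xym1.
suff top2 : forall j, (j <= m)%N ->
    (forall k, x (m - j)%N k = y (m - j)%N k) /\
    (forall k, x (m - j).+1 k = y (m - j).+1 k).
  move=> a; rewrite leq_eqVlt => /predU1P [-> //|]; rewrite ltnS => le_am.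
  by have := top2 _ (leq_subr a m); rewrite subKn // => -[].
elim=> [|j IH] lt_jm; first by rewrite subn0.
have [xy xy1] := IH (ltnW lt_jm).
have def_mj : (m - j)%N = (m - j.+1).+1 by rewrite subnS prednK // subn_gt0.
rewrite -def_mj; split=> // k.
have mj_in : (1 <= m - j <= m)%N by rewrite leq_subr andbT subn_gt0.
have := chain_x _ k mj_in; have := chain_y _ k mj_in.
rewrite def_mj /= -def_mj => rel_y rel_x.
by apply: (addIr (x (m - j).+1 k)); rewrite -rel_x !xy rel_y xy1.
Qed.

Variables (x : nat -> int -> G) (s : int) (m : nat).
Hypothesis chain_x : chain_rel x s m.

Lemma chain_string_sum : (forall k, x 0%N k = 0) ->
  forall a, (a <= m.+1)%N -> forall k, x a k = string_sum (x 1%N) s a k.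
Proof.
move=> x0.
suff chain2 a : (a <= m)%N -> (forall k, x a k = string_sum (x 1%N) s a k) /\
                             (forall k, x a.+1 k = string_sum (x 1%N) s a.+1 k).
  by case=> [|a] le_am k; [rewrite x0 string_sum0 | case: (chain2 a le_am)].
elim: a => [|a IH] le_am.
  by split=> k; rewrite ?x0 ?string_sum0 // string_sumSr string_sum0 add0r mulr0 addr0.
have [xa xa1] := IH (ltnW le_am); split=> // k.
have /= rel_a := @chain_x a.+1 k le_am.
by apply: (addrI (x a k)); rewrite -rel_a !xa1 xa string_sum_rec [RHS]addrC subrK.
Qed.

Lemma chain_dirichlet_reflection : (forall k, x 0%N k = 0) ->
  (forall k, x m.+1 k = 0) ->
  forall a k, (a <= m.+1)%N -> x a (k + s * m.+1%:Z) = - x (m.+1 - a)%N k.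
Proof.
move=> x0 xm a k le_am.
have xS := chain_string_sum x0.
have := string_sum_cat (x 1%N) s (m.+1 - a) a (k + s * a%:Z).
rewrite subnK // -xS // xm -xS ?leq_subr // -xS //.
rewrite addrK -addrA -mulrDr -PoszD addnC subnK // => /esym/eqP.
by rewrite addr_eq0 => /eqP ->; rewrite opprK.
Qed.
End StringSum.

Lemma big_filter_uniq_mem (G : zmodType) (s cs : seq nat) (P : pred nat) (F : nat -> G) :
  uniq s -> uniq cs -> {in s, forall b, P b = (b \in cs)} ->
  \sum_(b <- s | P b) F b = \sum_(c <- cs | c \in s) F c.
Proof.
move=> us ucs P_cs; rewrite -big_filter -[RHS]big_filter; apply: perm_big.
apply: uniq_perm; rewrite ?filter_uniq // => b; rewrite !mem_filter.
by case s_b: (b \in s); rewrite ?andbF // andbT P_cs.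
Qed.

Lemma mem_succ_pairs (s : seq nat) x y :
  ((x, y) \in [seq (i, i.+1) | i <- s]) = (y == x.+1) && (x \in s).
Proof.
elim: s => [|i s IH] /=; first by rewrite in_nil andbF.
rewrite in_cons IH xpair_eqE in_cons.
by case: (x =P i) => [->|_] /=; case: (y == _).
Qed.

Definition simply_laced_system (d : Dynkin) (G : zmodType) (F : nat -> int -> G) :=
  forall a k, (1 <= a <= rank d)%N ->
    F a (k - 1) + F a (k + 1) = \sum_(b <- iota 1 (rank d) | adj d a b) F b k.

Definition half_periodic (d : Dynkin) (G : zmodType) (F : nat -> int -> G) :=
  forall a k, (1 <= a <= rank d)%N ->
    F a (k + (tnum d * hdual d)%N%:Z) = - F (omega d a) k.

Lemma adjA n a b :
  adj (TA n) a b = ((b == a.+1) && (1 <= a < n)%N) || ((a == b.+1) && (1 <= b < n)%N).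
Proof. by rewrite /adj /= !mem_succ_pairs !mem_iota; apply/idP/idP; lia. Qed.

Lemma A_half_period (G : zmodType) n (F : nat -> int -> G) :
  simply_laced_system (TA n.+1) F -> half_periodic (TA n.+1) F.
Proof.
move=> sysF a k /= a_in; rewrite mul1n.
pose x b := if (1 <= b <= n.+1)%N then F b else fun=> 0.
have chain_x : chain_rel x 1 n.+1.
  move=> b k' b_in; rewrite /x b_in sysF //.
  rewrite (@big_filter_uniq_mem _ _ [:: b.-1; b.+1]) ?iota_uniq //; first last.
  - by move=> c; rewrite mem_iota /= adjA !inE => c_in; apply/idP/idP; move: c_in; lia.
  - by rewrite /= inE; apply/negP; lia.
  rewrite !big_cons big_nil !mem_iota add1n !ltnS.
  by case: ifP => _; case: ifP => _; rewrite ?addr0 ?add0r.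
have x_end k' : x n.+2 k' = 0 by rewrite /x ltnn andbF.
have le_an2 : (a <= n.+2)%N by lia.
have := chain_dirichlet_reflection chain_x (fun=> erefl) x_end k le_an2.
by rewrite /x a_in mul1r ifT //; move: a_in; clear; lia.
Qed.

Lemma Fz0 (G : zmodType) (F : nat -> int -> G) k : Fz F 0 k = 0.
Proof. by []. Qed.

Lemma Fz_gt0 (G : zmodType) (F : nat -> int -> G) a k : (0 < a)%N -> Fz F a k = F a k.
Proof. by rewrite /Fz; case: a. Qed.

Lemma chain_rel_Fz (G : zmodType) (F : nat -> int -> G) s m :
  (forall a k, (1 <= a <= m)%N -> F a (k - s) + F a (k + s) = Fz F a.-1 k + F a.+1 k) ->
  chain_rel (Fz F) s m.
Proof.
move=> relF a k a_in; have a_gt0 : (0 < a)%N by case/andP: a_in.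
by rewrite [Fz F a (_ - _)]Fz_gt0 // [Fz F a _]Fz_gt0 // [Fz F a.+1 _]Fz_gt0 // relF.
Qed.

Section ShiftedTail.
Variables (G : zmodType) (T : nat -> int -> G) (m : nat) (s p : int).
Hypothesis chain_T : chain_rel (Fz T) s m.+1.
Hypothesis tail_T : forall k,
  T m.+2 (k - p) + T m.+2 (k + p) = T m.+1 (k - (p - s)) + T m.+1 (k + (p - s)).

Lemma Fz_chain_string_sum a k : (1 <= a <= m.+2)%N -> T a k = string_sum (T 1%N) s a k.
Proof.
by case/andP=> a_gt0 le_am; rewrite -Fz_gt0 // (chain_string_sum chain_T (Fz0 T)).
Qed.

Lemma shifted_tail_antiperiodic a k : (1 <= a <= m.+2)%N ->
  T a (k + ((p + s * m.+1%:Z) + (p + s * m.+1%:Z))) = - T a k.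
Proof.
move=> a_in; rewrite !(Fz_chain_string_sum _ a_in).
apply/string_sum_antiperiodic/antiperiodic_of_reflection => {a_in}k.
have := tail_T k.
rewrite !(@Fz_chain_string_sum m.+1) ?(@Fz_chain_string_sum m.+2) ?leqnSn ?leqnn //.
rewrite string_sumSl [string_sum _ _ m.+2 (k + p)]string_sumSr.
have -> : k - p - s * m.+1%:Z = k - (p + s * m.+1%:Z) by ring.
have -> : k + p + s * m.+1%:Z = k + (p + s * m.+1%:Z) by ring.
have -> : k - p + s = k - (p - s) by ring.
have -> : k + p - s = k + (p - s) by ring.
rewrite [string_sum _ _ m.+1 (k + _) + _]addrC addrACA.
by move/(canRL (addrK _)); rewrite subrr.
Qed.
End ShiftedTail.

Section MirrorSum.
Variable G : zmodType.
Implicit Types (f : int -> G) (s e : int).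

Definition mirror_sum f s e (a : nat) (k : int) : G :=
  f (k - (e - s * a%:Z)) + f (k + (e - s * a%:Z)).

Lemma mirror_sum_chain f s e m : chain_rel (mirror_sum f s e) s m.
Proof.
move=> a k a_in; rewrite /mirror_sum.
have -> : (a.-1)%:Z = a%:Z - 1 by case: a a_in => // a _; rewrite /= intS; ring.
rewrite intS; set e' := e - s * a%:Z.
have -> : k - (e - s * (a%:Z - 1)) = k - s - e' by rewrite /e'; ring.
have -> : k + (e - s * (a%:Z - 1)) = k + s + e' by rewrite /e'; ring.
have -> : k - (e - s * (1 + a%:Z)) = k + s - e' by rewrite /e'; ring.
have -> : k + (e - s * (1 + a%:Z)) = k - s + e' by rewrite /e'; ring.
by rewrite [LHS]addrACA [RHS]addrACA; congr (_ + _); exact: addrC.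
Qed.

Lemma mirror_sum_antiperiodic f s e N a k : (forall j, f (j + N) = - f j) ->
  mirror_sum f s e a (k + N) = - mirror_sum f s e a k.
Proof. by move=> fN; rewrite /mirror_sum [RHS]opprD -!fN; congr (f _ + f _); ring. Qed.
End MirrorSum.

Section DoubledTail.
Variables (G : zmodType) (Y : nat -> int -> G) (m : nat) (s q : int).
Hypothesis chain_Y : chain_rel (Fz Y) s m.
Hypothesis penult_Y : forall k, Y m.+1 (k - s) + Y m.+1 (k + s) =
  Fz Y m k + (Y m.+2 (k - (q - s)) + Y m.+2 (k + (q - s))).
Hypothesis tail_Y : forall k, Y m.+2 (k - q) + Y m.+2 (k + q) = Y m.+1 k.

Let e := q + s * m.+1%:Z.

(* Folding the tail node into the penultimate one leaves a chain of length
   [m.+1] whose last two nodes are mirror sums of [Y m.+2]. *)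
Lemma doubled_tail_mirror a k : (a <= m.+1)%N -> Fz Y a k = mirror_sum (Y m.+2) s e a k.
Proof.
pose x b := if b == m.+2 then mirror_sum (Y m.+2) s e m.+2 else Fz Y b.
have chain_x : chain_rel x s m.+1.
  move=> b k' b_in; rewrite /x.
  have [lt_bm|->] : (b < m.+1)%N \/ b = m.+1 by lia.
    by rewrite !ifN; try lia; apply: chain_Y; lia.
  rewrite eqxx !ifN; try lia.
  rewrite [Fz Y m.+1 (_ - s)]Fz_gt0 // [Fz Y m.+1 _]Fz_gt0 // penult_Y /mirror_sum /e !intS.
  by congr (_ + (Y _ _ + Y _ _)); ring.
move=> le_am; have -> : Fz Y a k = x a k by rewrite /x ifN //; lia.
apply: (chain_unique chain_x (@mirror_sum_chain _ (Y m.+2) s e m.+1) _ _ (leqW le_am)) => k'.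
  by rewrite /x (ltn_eqF (ltnSn _)) Fz_gt0 // /mirror_sum -tail_Y /e; congr (Y _ _ + Y _ _); ring.
by rewrite /x eqxx.
Qed.

Lemma doubled_tail_antiperiodic a k : (1 <= a <= m.+2)%N ->
  Y a (k + (e + e)) = - Y a k.
Proof.
have tail_antiperiodic j : Y m.+2 (j + (e + e)) = - Y m.+2 j.
  apply: antiperiodic_of_reflection => k'.
  by have := doubled_tail_mirror k' (leq0n _); rewrite /mirror_sum mulr0 subr0.
move=> a_in; have [le_am|->] : (a <= m.+1)%N \/ a = m.+2 by lia.
  rewrite -!(@Fz_gt0 _ Y a); try lia.
  by rewrite !doubled_tail_mirror // mirror_sum_antiperiodic.
exact: tail_antiperiodic.
Qed.
End DoubledTail.

Section TypesBC.
Variables (G : zmodType) (m : nat) (F : nat -> int -> G).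

Lemma B_T_half_period : is_T_system (TB m.+2) F -> half_periodic (TB m.+2) F.
Proof.
move=> sysF a k a_in.
have -> : (tnum (TB m.+2) * hdual (TB m.+2))%N%:Z = (1 + 2 * m.+1%:Z) + (1 + 2 * m.+1%:Z).
  by rewrite /=; lia.
have rel b k' := sysF b k'; rewrite /T_rel !subSS subn0 in rel.
apply: shifted_tail_antiperiodic => // [|k'].
- apply: chain_rel_Fz => b k' b_in; have := rel b k'.
  have [le_bm|->] : (b <= m)%N \/ b = m.+1 by lia.
    by rewrite le_bm; apply=> /=; lia.
  by rewrite ltnn eqxx; apply=> /=; lia.
- have := rel m.+2 k' (leqnn _).
  have -> : (m.+2 <= m)%N = false by lia.
  have -> : (m.+2 == m.+1) = false by lia.
  have -> : k' - (1 - 2) = k' + 1 by ring.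
  have -> : k' + (1 - 2) = k' - 1 by ring.
  by rewrite [RHS]addrC.
Qed.

Lemma C_Y_half_period : is_Y_system (TC m.+2) F -> half_periodic (TC m.+2) F.
Proof.
move=> sysF a k a_in.
have -> : (tnum (TC m.+2) * hdual (TC m.+2))%N%:Z = (2 + 1 * m.+1%:Z) + (2 + 1 * m.+1%:Z).
  by rewrite /=; lia.
have rel b k' := sysF b k'; rewrite /Y_rel !subSS subn0 in rel.
apply: shifted_tail_antiperiodic => // [|k'].
- apply: chain_rel_Fz => b k' b_in; have := rel b k'.
  have [le_bm|->] : (b <= m)%N \/ b = m.+1 by lia.
    by rewrite le_bm; apply=> /=; lia.
  by rewrite ltnn eqxx; apply=> /=; lia.
- have := rel m.+2 k' (leqnn _).
  have -> : (m.+2 <= m)%N = false by lia.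
  have -> : (m.+2 == m.+1) = false by lia.
  by have -> : (2 - 1 : int) = 1 by [].
Qed.

Lemma C_T_half_period : is_T_system (TC m.+2) F -> half_periodic (TC m.+2) F.
Proof.
move=> sysF a k a_in.
have -> : (tnum (TC m.+2) * hdual (TC m.+2))%N%:Z = (2 + 1 * m.+1%:Z) + (2 + 1 * m.+1%:Z).
  by rewrite /=; lia.
have rel b k' := sysF b k'; rewrite /T_rel !subSS subn0 in rel.
apply: doubled_tail_antiperiodic => // [|k'|k'].
- apply: chain_rel_Fz => b k' b_in; have := rel b k'.
  by rewrite ifT; [apply=> /=|]; lia.
- have := rel m.+1 k' (leqW (leqnn _)).
  rewrite ltnn eqxx -addrA.
  by have -> : (2 - 1 : int) = 1 by [].
- have := rel m.+2 k' (leqnn _).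
  have -> : (m.+2 <= m)%N = false by lia.
  by have -> : (m.+2 == m.+1) = false by lia.
Qed.

Lemma B_Y_half_period : is_Y_system (TB m.+2) F -> half_periodic (TB m.+2) F.
Proof.
move=> sysF a k a_in.
have -> : (tnum (TB m.+2) * hdual (TB m.+2))%N%:Z = (1 + 2 * m.+1%:Z) + (1 + 2 * m.+1%:Z).
  by rewrite /=; lia.
have rel b k' := sysF b k'; rewrite /Y_rel !subSS subn0 in rel.
apply: doubled_tail_antiperiodic => // [|k'|k'].
- apply: chain_rel_Fz => b k' b_in; have := rel b k'.
  by rewrite ifT; [apply=> /=|]; lia.
- have := rel m.+1 k' (leqW (leqnn _)).
  rewrite ltnn eqxx -addrA.
  have -> : k' - (1 - 2) = k' + 1 by ring.
  have -> : k' + (1 - 2) = k' - 1 by ring.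
  by rewrite [F m.+2 _ + _]addrC.
- have := rel m.+2 k' (leqnn _).
  have -> : (m.+2 <= m)%N = false by lia.
  by have -> : (m.+2 == m.+1) = false by lia.
Qed.
End TypesBC.

Section ForkSum.
Variable G : zmodType.
Implicit Types p q : int -> G.

(* Node [b] of a chain ending in a fork with leaves [p] and [q], written in
   terms of the leaves; [j] is the distance from [b] to the fork. *)
Definition fork_sum p q (n b : nat) (k : int) : G :=
  let j := (n.+2 - b)%N in p (k - j%:Z) + (if odd j then p else q) (k + j%:Z).

Lemma fork_sum_chain p q n :
  (forall i, p (i - 1) + p (i + 1) = q (i - 1) + q (i + 1)) ->
  chain_rel (fork_sum p q n) 1 n.+1.
Proof.
move=> pq b k b_in; rewrite /fork_sum.
have -> : (n.+2 - b.-1 = (n.+2 - b).+1)%N by lia.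
have -> : (n.+2 - b.+1 = (n.+2 - b).-1)%N by lia.
have : (0 < n.+2 - b)%N by lia.
case: (n.+2 - b)%N => // j _; rewrite /= !intS.
have -> : k - 1 - (1 + j%:Z) = k - (1 + (1 + j%:Z)) by ring.
have -> : k + 1 - (1 + j%:Z) = k - j%:Z by ring.
have -> : k - 1 + (1 + j%:Z) = k + j%:Z by ring.
have -> : k + 1 + (1 + j%:Z) = k + (1 + (1 + j%:Z)) by ring.
rewrite [LHS]addrACA [RHS]addrACA; congr (_ + _).
have -> : k + j%:Z = (k + (1 + j%:Z)) - 1 by ring.
have -> : k + (1 + (1 + j%:Z)) = (k + (1 + j%:Z)) + 1 by ring.
by case: (odd j) => /=; [rewrite -pq | rewrite pq]; rewrite addrC.
Qed.

Lemma fork_sum_antiperiodic p q p' q' n N b k :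
  (forall i, p (i + N) = - p' i) -> (forall i, q (i + N) = - q' i) ->
  fork_sum p q n b (k + N) = - fork_sum p' q' n b k.
Proof.
move=> pN qN; rewrite /fork_sum [RHS]opprD.
have -> : k + N - (n.+2 - b)%N%:Z = k - (n.+2 - b)%N%:Z + N by ring.
have -> : k + N + (n.+2 - b)%N%:Z = k + (n.+2 - b)%N%:Z + N by ring.
by rewrite pN; case: odd; rewrite ?pN ?qN.
Qed.
End ForkSum.

Section Fork.
Variables (G : zmodType) (T : nat -> int -> G) (n : nat).
Hypothesis chain_T : chain_rel (Fz T) 1 n.
Hypothesis branch_T : forall k,
  T n.+1 (k - 1) + T n.+1 (k + 1) = Fz T n k + (T n.+2 k + T n.+3 k).
Hypothesis leaf1_T : forall k, T n.+2 (k - 1) + T n.+2 (k + 1) = T n.+1 k.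
Hypothesis leaf2_T : forall k, T n.+3 (k - 1) + T n.+3 (k + 1) = T n.+1 k.

(* Merging the two leaves into one node turns the fork into a chain. *)
Let x b := if b == n.+2 then (fun k => T n.+2 k + T n.+3 k) else Fz T b.

Let chain_x : chain_rel x 1 n.+1.
Proof.
move=> b k b_in; rewrite /x.
have [lt_bn|->] : (b < n.+1)%N \/ b = n.+1 by lia.
  by rewrite !ifN; try lia; apply: chain_T; lia.
rewrite eqxx !ifN; try lia.
by rewrite [Fz T n.+1 (_ - 1)]Fz_gt0 // [Fz T n.+1 _]Fz_gt0 // branch_T.
Qed.

Section Leaves.
Variables p q : int -> G.
Hypothesis leaves : (p = T n.+2 /\ q = T n.+3) \/ (p = T n.+3 /\ q = T n.+2).

Lemma fork_solution b k : (b <= n.+2)%N -> x b k = fork_sum p q n b k.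
Proof.
have leaf_p i : p (i - 1) + p (i + 1) = T n.+1 i.
  by case: leaves => -[-> _]; rewrite ?leaf1_T ?leaf2_T.
have leaf_q i : q (i - 1) + q (i + 1) = T n.+1 i.
  by case: leaves => -[_ ->]; rewrite ?leaf1_T ?leaf2_T.
have pq i : p (i - 1) + p (i + 1) = q (i - 1) + q (i + 1) by rewrite leaf_p leaf_q.
move=> le_bn; apply: (chain_unique chain_x (@fork_sum_chain _ p q n pq) _ _ le_bn) => k'.
  rewrite /x (ltn_eqF (ltnSn _)) Fz_gt0 // /fork_sum subSn // subnn /=.
  by rewrite -leaf_p.
rewrite /x /fork_sum subnn eqxx /= ?subr0 ?addr0.
by case: leaves => -[-> ->] //; rewrite addrC.
Qed.

Lemma fork_leaf_antiperiodic i :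
  (if odd n then p else q) (i + (n.+2%:Z + n.+2%:Z)) = - p i.
Proof.
have := fork_solution (i + n.+2%:Z) (leq0n _).
rewrite /x /fork_sum /= subn0 addrK -addrA => /eqP.
by rewrite Fz0 negbK eq_sym [p i + _]addrC addr_eq0 => /eqP.
Qed.
End Leaves.

Lemma fork_half_period a k : (1 <= a <= n.+3)%N ->
  T a (k + (n.+2%:Z + n.+2%:Z)) = - T (omega (TD n.+3) a) k.
Proof.
have leaf2 := fork_leaf_antiperiodic (or_introl (conj erefl erefl)).
have leaf3 := fork_leaf_antiperiodic (or_intror (conj erefl erefl)).
rewrite /omega /= negbK => a_in.
have [lt_an|[->|->]] : (a < n.+2)%N \/ a = n.+2 \/ a = n.+3 by lia.
- rewrite (ltn_eqF lt_an) (ltn_eqF (leqW lt_an)) if_same.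
  have T_fork p q k' : (p = T n.+2 /\ q = T n.+3) \/ (p = T n.+3 /\ q = T n.+2) ->
      T a k' = fork_sum p q n a k'.
    by move=> leaves; rewrite -fork_solution ?(ltnW lt_an) // /x ifN ?Fz_gt0 //; lia.
  rewrite [LHS](T_fork (T n.+2) (T n.+3)); last by left.
  case: (odd n) leaf2 leaf3 => /= leaf2 leaf3.
    by rewrite (fork_sum_antiperiodic _ _ _ leaf2 leaf3) -T_fork //; left.
  by rewrite (fork_sum_antiperiodic _ _ _ leaf3 leaf2) -T_fork //; right.
- rewrite eqxx; case: (odd n) leaf2 leaf3 => /= leaf2 leaf3; [exact: leaf2 | exact: leaf3].
- rewrite (gtn_eqF (ltnSn _)) eqxx.
  by case: (odd n) leaf2 leaf3 => /= leaf2 leaf3; [exact: leaf3 | exact: leaf2].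
Qed.
End Fork.

Lemma adjD n a b : adj (TD n.+3) a b =
  [|| (b == a.+1) && (1 <= a <= n), (a == b.+1) && (1 <= b <= n),
      (a == n.+1) && ((b == n.+2) || (b == n.+3)) |
      (b == n.+1) && ((a == n.+2) || (a == n.+3))]%N.
Proof.
rewrite /adj /sl_edges !subSS subn0 !mem_cat !mem_succ_pairs !inE !xpair_eqE !mem_iota.
by apply/idP/idP; lia.
Qed.

Section SimplyLacedD.
Variables (G : zmodType) (n : nat) (F : nat -> int -> G).
Hypothesis sysF : simply_laced_system (TD n.+3) F.

Let neighbours a cs k : (1 <= a <= n.+3)%N -> uniq cs ->
  {in iota 1 n.+3, forall b, adj (TD n.+3) a b = (b \in cs)} ->
  F a (k - 1) + F a (k + 1) = \sum_(c <- cs | c \in iota 1 n.+3) F c k.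
Proof.
by move=> a_in ucs adj_cs; rewrite sysF //; apply: big_filter_uniq_mem; rewrite ?iota_uniq.
Qed.

Let leaf_rel b k : (b == n.+2) || (b == n.+3) ->
  F b (k - 1) + F b (k + 1) = F n.+1 k.
Proof.
move=> b_leaf; rewrite (@neighbours _ [:: n.+1]); first last.
- by move=> c; rewrite mem_iota adjD !inE => c_in; apply/idP/idP; move: c_in b_leaf; lia.
- by [].
- by move: b_leaf; lia.
by rewrite big_cons big_nil mem_iota ifT ?addr0; last lia.
Qed.

Lemma D_half_period : half_periodic (TD n.+3) F.
Proof.
move=> a k a_in; have -> : (tnum (TD n.+3) * hdual (TD n.+3))%N = (n.+2 + n.+2)%N.
  by rewrite /= mul1n; lia.
rewrite PoszD; apply: fork_half_period => // [|k'|k'|k'].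
- apply: chain_rel_Fz => b k' b_in.
  rewrite (@neighbours _ [:: b.-1; b.+1]); first last.
  + by move=> c; rewrite mem_iota adjD !inE => c_in; apply/idP/idP; move: c_in; lia.
  + by rewrite /= inE; apply/negP; lia.
  + lia.
  rewrite !big_cons big_nil !mem_iota /Fz.
  case: (b =P 1%N) => [->|ne_b1] /=; first by rewrite add0r addr0.
  have -> : (b.-1 == 0)%N = false by lia.
  by rewrite !ifT ?addr0 //; lia.
- rewrite (@neighbours _ [:: n; n.+2; n.+3]); first last.
  + by move=> c; rewrite mem_iota adjD !inE => c_in; apply/idP/idP; move: c_in; lia.
  + by rewrite /= !inE; apply/andP; split; [apply/negP|]; lia.
  + lia.
  rewrite !big_cons big_nil !mem_iota /Fz.
  case: (n =P 0%N) => [->|ne_n0] /=; first by rewrite add0r addr0.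
  by rewrite !ifT ?addr0 //; lia.
- by apply: leaf_rel; rewrite eqxx.
- by apply: leaf_rel; rewrite eqxx orbT.
Qed.
End SimplyLacedD.

(* A term [(b, c)] stands for [F b (k + c)], a relation for the equality of the
   sums of its two lists of terms, and a linear combination is a list of
   terms with integer coefficients. *)
Definition relation_form := (seq (nat * int) * seq (nat * int))%type.
Definition lincomb := seq (nat * int * int).

Section Evaluation.
Variables (G : zmodType) (F : nat -> int -> G).

Definition eval_terms (k : int) (s : seq (nat * int)) : G := \sum_(x <- s) F x.1 (k + x.2).

Definition eval_lincomb (k : int) (L : lincomb) : G :=
  \sum_(x <- L) F x.1.1 (k + x.1.2) *~ x.2.

Definition coef_of (key : nat * int) (L : lincomb) : int :=
  foldr (fun y acc => if y.1 == key then y.2 + acc else acc) 0 L.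

Definition lincomb_vanishes (L : lincomb) : bool := all (fun y => coef_of y.1 L == 0) L.

Variable k : int.

Lemma eval_lincomb_key key L : eval_lincomb k L =
  F key.1 (k + key.2) *~ coef_of key L + eval_lincomb k [seq y <- L | y.1 != key].
Proof.
elim: L => [|y L IH]; first by rewrite /eval_lincomb !big_nil mulr0z addr0.
rewrite /eval_lincomb /= !big_cons -/(eval_lincomb k L) IH.
case: (y.1 =P key) => [<-|_] /=; first by rewrite mulrzDr addrA.
by rewrite big_cons -/(eval_lincomb _ _) addrCA.
Qed.

Lemma coef_of_filter key key' L : key' != key ->
  coef_of key' [seq y <- L | y.1 != key] = coef_of key' L.
Proof.
move=> ne_key; elim: L => //= y L IH.
case: (y.1 =P key) => [->|_] /=; last by rewrite IH.
by rewrite IH eq_sym (negbTE ne_key).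
Qed.

Lemma eval_lincomb_vanishes L : lincomb_vanishes L -> eval_lincomb k L = 0.
Proof.
elim: {L}(size L) {-2}L (leqnn (size L)) => [|n IH] [|y L] // size_L;
  try by rewrite /eval_lincomb big_nil.
case/andP=> /eqP coef_y all_L.
rewrite (@eval_lincomb_key y.1) coef_y mulr0z add0r /= eqxx /=.
apply: IH; first by rewrite size_filter (leq_trans (count_size _ _)).
apply/allP=> z; rewrite mem_filter => /andP [ne_z L_z].
rewrite coef_of_filter //; move: (allP all_L z L_z).
by rewrite /= [y.1 == _]eq_sym (negbTE ne_z).
Qed.
End Evaluation.

Definition certificate := seq (nat * nat * nat).

Definition shift_terms (c : int) (s : seq (nat * int)) := [seq (x.1, x.2 + c) | x <- s].

Definition relation_lincomb (n c : int) (R : relation_form) : lincomb :=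
  [seq (x, n) | x <- shift_terms c R.1] ++ [seq (x, - n) | x <- shift_terms c R.2].

(* An entry [(b, c, n)] of a certificate stands for [n] times the relation at
   node [b], taken at spectral parameter [k + c]. *)
Definition certificate_lincomb (rel : nat -> relation_form) (C : certificate) : lincomb :=
  flatten [seq relation_lincomb x.2%:Z x.1.2%:Z (rel x.1.1) | x <- C].

Definition half_period_lincomb (d : Dynkin) (a : nat) : lincomb :=
  [:: (a, (tnum d * hdual d)%N%:Z, 1); (omega d a, 0, 1)].

Definition certificate_ok d rel (a : nat) (C : certificate) : bool :=
  all (fun x => 1 <= x.1.1 <= rank d)%N C &&
  lincomb_vanishes (half_period_lincomb d a ++
                    [seq (x.1, - x.2) | x <- certificate_lincomb rel C]).

Section Certificates.
Variables (G : zmodType) (F : nat -> int -> G).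

Lemma eval_lincomb_cat k L1 L2 :
  eval_lincomb F k (L1 ++ L2) = eval_lincomb F k L1 + eval_lincomb F k L2.
Proof. exact: big_cat. Qed.

Lemma eval_lincomb_opp k L :
  eval_lincomb F k [seq (x.1, - x.2) | x <- L] = - eval_lincomb F k L.
Proof. by rewrite /eval_lincomb big_map -sumrN; apply: eq_bigr => x _; rewrite mulrNz. Qed.

Lemma eval_shift_terms k c s : eval_terms F k (shift_terms c s) = eval_terms F (k + c) s.
Proof. by rewrite /eval_terms big_map; apply: eq_bigr => x _; rewrite /= addrA addrAC. Qed.

Lemma eval_lincomb_const k n s :
  eval_lincomb F k [seq (x, n) | x <- s] = eval_terms F k s *~ n.
Proof. by rewrite /eval_lincomb big_map mulrz_suml. Qed.

Lemma eval_relation_lincomb k n c R : eval_lincomb F k (relation_lincomb n c R) =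
  (eval_terms F (k + c) R.1 - eval_terms F (k + c) R.2) *~ n.
Proof.
by rewrite /relation_lincomb eval_lincomb_cat !eval_lincomb_const !eval_shift_terms mulrzBl mulrNz.
Qed.

Variables (d : Dynkin) (rel : nat -> relation_form).
Hypothesis rel_holds : forall b k, (1 <= b <= rank d)%N ->
  eval_terms F k (rel b).1 = eval_terms F k (rel b).2.

Lemma eval_certificate_lincomb C k : all (fun x => 1 <= x.1.1 <= rank d)%N C ->
  eval_lincomb F k (certificate_lincomb rel C) = 0.
Proof.
elim: C => [|x C IH] /=; first by rewrite /eval_lincomb big_nil.
case/andP=> x_in /IH; rewrite /certificate_lincomb /= eval_lincomb_cat => ->.
by rewrite eval_relation_lincomb rel_holds // subrr mul0rz addr0.
Qed.

Lemma certificate_half_period a C k : certificate_ok d rel a C ->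
  F a (k + (tnum d * hdual d)%N%:Z) = - F (omega d a) k.
Proof.
case/andP=> C_in /(eval_lincomb_vanishes F k).
rewrite eval_lincomb_cat eval_lincomb_opp eval_certificate_lincomb // oppr0 addr0.
rewrite /eval_lincomb !big_cons big_nil !mulr1z addr0 addr0 => /eqP.
by rewrite addr_eq0 => /eqP.
Qed.

Lemma certificates_half_period (cert : seq certificate) :
  all (fun a => certificate_ok d rel a (nth [::] cert a.-1)) (iota 1 (rank d)) ->
  half_periodic d F.
Proof.
move=> /allP cert_ok a k a_in; apply: certificate_half_period.
by apply: cert_ok; rewrite mem_iota; lia.
Qed.
End Certificates.

Definition sl_relation (d : Dynkin) (b : nat) : relation_form :=
  ([:: (b, -1); (b, 1)], [seq (b', 0) | b' <- iota 1 (rank d) & adj d b b']).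

Local Close Scope ring_scope.

Definition F4_T_relation (b : nat) : relation_form :=
  match b with
  | 1 => ([:: (1, (-2)%Z); (1, 2%Z)], [:: (2, 0%Z)])
  | 2 => ([:: (2, (-2)%Z); (2, 2%Z)], [:: (1, 0%Z); (3, 0%Z)])
  | 3 => ([:: (3, (-1)%Z); (3, 1%Z)], [:: (2, (-1)%Z); (2, 1%Z); (4, 0%Z)])
  | _ => ([:: (4, (-1)%Z); (4, 1%Z)], [:: (3, 0%Z)])
  end.

Definition F4_Y_relation (b : nat) : relation_form :=
  match b with
  | 1 => ([:: (1, (-2)%Z); (1, 2%Z)], [:: (2, 0%Z)])
  | 2 => ([:: (2, (-2)%Z); (2, 2%Z)], [:: (1, 0%Z); (3, (-1)%Z); (3, 1%Z)])
  | 3 => ([:: (3, (-1)%Z); (3, 1%Z)], [:: (2, 0%Z); (4, 0%Z)])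
  | _ => ([:: (4, (-1)%Z); (4, 1%Z)], [:: (3, 0%Z)])
  end.

Definition G2_T_relation (b : nat) : relation_form :=
  match b with
  | 1 => ([:: (1, (-3)%Z); (1, 3%Z)], [:: (2, 0%Z)])
  | _ => ([:: (2, (-1)%Z); (2, 1%Z)], [:: (1, (-2)%Z); (1, 0%Z); (1, 2%Z)])
  end.

Definition G2_Y_relation (b : nat) : relation_form :=
  match b with
  | 1 => ([:: (1, (-3)%Z); (1, 3%Z)], [:: (2, (-2)%Z); (2, 0%Z); (2, 2%Z)])
  | _ => ([:: (2, (-1)%Z); (2, 1%Z)], [:: (1, 0%Z)])
  end.

Definition E6_certificate : seq certificate :=
  [:: [:: (1, 11, 1); (2, 10, 1); (3, 9, 1); (4, 8, 1); (5, 8, 1); (3, 7, 1); (6, 7, 1); (2, 6, 1);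
      (5, 6, 1); (1, 5, 1); (3, 5, 1); (2, 4, 1); (4, 4, 1); (3, 3, 1); (5, 2, 1); (6, 1, 1)];
   [:: (2, 11, 1); (1, 10, 1); (3, 10, 1); (2, 9, 1); (4, 9, 1); (5, 9, 1); (3, 8, 2);
      (6, 8, 1); (2, 7, 1); (4, 7, 1); (5, 7, 2); (6, 6, 1); (1, 6, 1); (3, 6, 2); (4, 5, 1);
      (5, 5, 1); (2, 5, 2); (1, 4, 1); (3, 4, 2); (4, 3, 1); (5, 3, 1); (2, 3, 1); (6, 2, 1);
      (3, 2, 1); (5, 1, 1)];
   [:: (3, 11, 1); (2, 10, 1); (4, 10, 1); (5, 10, 1); (1, 9, 1); (3, 9, 2); (6, 9, 1);
      (4, 8, 1); (5, 8, 2); (2, 8, 2); (1, 7, 1); (3, 7, 3); (6, 7, 1); (4, 6, 2); (5, 6, 2);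
      (2, 6, 2); (1, 5, 1); (3, 5, 3); (6, 5, 1); (4, 4, 1); (5, 4, 2); (2, 4, 2); (1, 3, 1);
      (6, 3, 1); (3, 3, 2); (4, 2, 1); (5, 2, 1); (2, 2, 1); (3, 1, 1)];
   [:: (4, 11, 1); (3, 10, 1); (2, 9, 1); (5, 9, 1); (1, 8, 1); (3, 8, 1); (6, 8, 1); (2, 7, 1);
      (4, 7, 1); (5, 7, 1); (3, 6, 2); (2, 5, 1); (4, 5, 1); (5, 5, 1); (1, 4, 1); (3, 4, 1);
      (6, 4, 1); (2, 3, 1); (5, 3, 1); (3, 2, 1); (4, 1, 1)];
   [:: (5, 11, 1); (3, 10, 1); (6, 10, 1); (2, 9, 1); (4, 9, 1); (5, 9, 1); (1, 8, 1);
      (3, 8, 2); (4, 7, 1); (5, 7, 1); (2, 7, 2); (1, 6, 1); (6, 6, 1); (3, 6, 2); (4, 5, 1);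
      (2, 5, 1); (5, 5, 2); (6, 4, 1); (3, 4, 2); (4, 3, 1); (2, 3, 1); (5, 3, 1); (1, 2, 1);
      (3, 2, 1); (2, 1, 1)];
   [:: (6, 11, 1); (5, 10, 1); (3, 9, 1); (2, 8, 1); (4, 8, 1); (1, 7, 1); (3, 7, 1); (2, 6, 1);
      (5, 6, 1); (3, 5, 1); (6, 5, 1); (4, 4, 1); (5, 4, 1); (3, 3, 1); (2, 2, 1); (1, 1, 1)]].

Definition E7_certificate : seq certificate :=
  [:: [:: (1, 17, 1); (2, 16, 1); (3, 15, 1); (4, 14, 1); (7, 14, 1); (5, 13, 1); (3, 13, 1);
      (6, 12, 1); (2, 12, 1); (4, 12, 1); (1, 11, 1); (3, 11, 1); (5, 11, 1); (2, 10, 1);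
      (7, 10, 1); (4, 10, 1); (3, 9, 2); (2, 8, 1); (7, 8, 1); (4, 8, 1); (1, 7, 1); (3, 7, 1);
      (5, 7, 1); (2, 6, 1); (4, 6, 1); (6, 6, 1); (3, 5, 1); (5, 5, 1); (7, 4, 1); (4, 4, 1);
      (3, 3, 1); (2, 2, 1); (1, 1, 1)];
   [:: (2, 17, 1); (1, 16, 1); (3, 16, 1); (2, 15, 1); (4, 15, 1); (7, 15, 1); (3, 14, 2);
      (5, 14, 1); (2, 13, 1); (4, 13, 2); (7, 13, 1); (6, 13, 1); (3, 12, 2); (5, 12, 2);
      (1, 12, 1); (2, 11, 2); (7, 11, 1); (6, 11, 1); (4, 11, 2); (5, 10, 1); (1, 10, 1);
      (3, 10, 3); (2, 9, 2); (7, 9, 2); (4, 9, 2); (5, 8, 1); (1, 8, 1); (3, 8, 3); (2, 7, 2);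
      (7, 7, 1); (4, 7, 2); (6, 7, 1); (5, 6, 2); (1, 6, 1); (3, 6, 2); (2, 5, 1); (7, 5, 1);
      (6, 5, 1); (4, 5, 2); (5, 4, 1); (3, 4, 2); (2, 3, 1); (7, 3, 1); (4, 3, 1); (1, 2, 1);
      (3, 2, 1); (2, 1, 1)];
   [:: (3, 17, 1); (2, 16, 1); (4, 16, 1); (7, 16, 1); (1, 15, 1); (3, 15, 2); (5, 15, 1);
      (4, 14, 2); (7, 14, 1); (2, 14, 2); (6, 14, 1); (1, 13, 1); (5, 13, 2); (3, 13, 3);
      (7, 12, 2); (2, 12, 2); (6, 12, 1); (4, 12, 3); (1, 11, 1); (5, 11, 2); (3, 11, 4);
      (7, 10, 2); (2, 10, 3); (6, 10, 1); (4, 10, 3); (1, 9, 2); (5, 9, 2); (3, 9, 4);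
      (7, 8, 2); (2, 8, 3); (6, 8, 1); (4, 8, 3); (1, 7, 1); (5, 7, 2); (3, 7, 4); (7, 6, 2);
      (2, 6, 2); (6, 6, 1); (4, 6, 3); (1, 5, 1); (5, 5, 2); (3, 5, 3); (7, 4, 1); (2, 4, 2);
      (6, 4, 1); (4, 4, 2); (1, 3, 1); (5, 3, 1); (3, 3, 2); (7, 2, 1); (2, 2, 1); (4, 2, 1);
      (3, 1, 1)];
   [:: (4, 17, 1); (3, 16, 1); (5, 16, 1); (2, 15, 1); (7, 15, 1); (4, 15, 1); (6, 15, 1);
      (1, 14, 1); (3, 14, 2); (5, 14, 1); (7, 13, 1); (4, 13, 2); (2, 13, 2); (1, 12, 1);
      (3, 12, 3); (5, 12, 1); (7, 11, 2); (4, 11, 2); (2, 11, 2); (6, 11, 1); (1, 10, 1);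
      (3, 10, 3); (5, 10, 2); (7, 9, 1); (4, 9, 3); (2, 9, 2); (6, 9, 1); (1, 8, 1); (3, 8, 3);
      (5, 8, 2); (7, 7, 2); (2, 7, 2); (6, 7, 1); (4, 7, 2); (1, 6, 1); (3, 6, 3); (5, 6, 1);
      (7, 5, 1); (2, 5, 2); (4, 5, 2); (1, 4, 1); (5, 4, 1); (3, 4, 2); (7, 3, 1); (2, 3, 1);
      (4, 3, 1); (6, 3, 1); (3, 2, 1); (5, 2, 1); (4, 1, 1)];
   [:: (5, 17, 1); (4, 16, 1); (6, 16, 1); (3, 15, 1); (5, 15, 1); (2, 14, 1); (7, 14, 1);
      (4, 14, 1); (1, 13, 1); (3, 13, 2); (7, 12, 1); (4, 12, 1); (2, 12, 2); (1, 11, 1);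
      (5, 11, 1); (3, 11, 2); (7, 10, 1); (2, 10, 1); (6, 10, 1); (4, 10, 2); (3, 9, 2);
      (5, 9, 2); (7, 8, 1); (2, 8, 1); (6, 8, 1); (4, 8, 2); (5, 7, 1); (1, 7, 1); (3, 7, 2);
      (7, 6, 1); (4, 6, 1); (2, 6, 2); (1, 5, 1); (3, 5, 2); (7, 4, 1); (4, 4, 1); (2, 4, 1);
      (5, 3, 1); (3, 3, 1); (6, 2, 1); (4, 2, 1); (5, 1, 1)];
   [:: (6, 17, 1); (5, 16, 1); (4, 15, 1); (3, 14, 1); (2, 13, 1); (7, 13, 1); (1, 12, 1);
      (3, 12, 1); (2, 11, 1); (4, 11, 1); (3, 10, 1); (5, 10, 1); (7, 9, 1); (4, 9, 1);
      (6, 9, 1); (3, 8, 1); (5, 8, 1); (2, 7, 1); (4, 7, 1); (1, 6, 1); (3, 6, 1); (2, 5, 1);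
      (7, 5, 1); (3, 4, 1); (4, 3, 1); (5, 2, 1); (6, 1, 1)];
   [:: (7, 17, 1); (3, 16, 1); (2, 15, 1); (4, 15, 1); (1, 14, 1); (3, 14, 1); (5, 14, 1);
      (2, 13, 1); (7, 13, 1); (4, 13, 1); (6, 13, 1); (3, 12, 2); (5, 12, 1); (2, 11, 1);
      (7, 11, 1); (4, 11, 2); (5, 10, 1); (1, 10, 1); (3, 10, 2); (7, 9, 1); (4, 9, 1);
      (6, 9, 1); (2, 9, 2); (1, 8, 1); (5, 8, 1); (3, 8, 2); (7, 7, 1); (2, 7, 1); (4, 7, 2);
      (5, 6, 1); (3, 6, 2); (7, 5, 1); (2, 5, 1); (4, 5, 1); (6, 5, 1); (1, 4, 1); (3, 4, 1);
      (5, 4, 1); (2, 3, 1); (4, 3, 1); (3, 2, 1); (7, 1, 1)]].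

Definition E8_certificate : seq certificate :=
  [:: [:: (1, 29, 1); (2, 28, 1); (3, 27, 1); (4, 26, 1); (5, 25, 1); (6, 24, 1); (8, 24, 1);
      (7, 23, 1); (5, 23, 1); (4, 22, 1); (6, 22, 1); (3, 21, 1); (5, 21, 1); (2, 20, 1);
      (4, 20, 1); (8, 20, 1); (1, 19, 1); (3, 19, 1); (5, 19, 1); (2, 18, 1); (4, 18, 1);
      (6, 18, 1); (3, 17, 1); (5, 17, 1); (7, 17, 1); (4, 16, 1); (8, 16, 1); (6, 16, 1);
      (5, 15, 2); (4, 14, 1); (8, 14, 1); (6, 14, 1); (3, 13, 1); (5, 13, 1); (7, 13, 1);
      (2, 12, 1); (4, 12, 1); (6, 12, 1); (1, 11, 1); (3, 11, 1); (5, 11, 1); (2, 10, 1);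
      (4, 10, 1); (8, 10, 1); (3, 9, 1); (5, 9, 1); (4, 8, 1); (6, 8, 1); (5, 7, 1); (7, 7, 1);
      (8, 6, 1); (6, 6, 1); (5, 5, 1); (4, 4, 1); (3, 3, 1); (2, 2, 1); (1, 1, 1)];
   [:: (2, 29, 1); (1, 28, 1); (3, 28, 1); (2, 27, 1); (4, 27, 1); (3, 26, 1); (5, 26, 1);
      (4, 25, 1); (6, 25, 1); (8, 25, 1); (5, 24, 2); (7, 24, 1); (4, 23, 1); (6, 23, 2);
      (8, 23, 1); (5, 22, 2); (7, 22, 1); (3, 22, 1); (4, 21, 2); (8, 21, 1); (6, 21, 1);
      (2, 21, 1); (3, 20, 2); (5, 20, 2); (1, 20, 1); (8, 19, 1); (6, 19, 1); (2, 19, 2);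
      (4, 19, 2); (1, 18, 1); (7, 18, 1); (3, 18, 2); (5, 18, 2); (8, 17, 1); (2, 17, 1);
      (4, 17, 2); (6, 17, 2); (7, 16, 1); (3, 16, 1); (5, 16, 3); (8, 15, 2); (4, 15, 2);
      (6, 15, 2); (7, 14, 1); (3, 14, 1); (5, 14, 3); (8, 13, 1); (4, 13, 2); (6, 13, 2);
      (2, 13, 1); (7, 12, 1); (3, 12, 2); (5, 12, 2); (1, 12, 1); (8, 11, 1); (6, 11, 1);
      (2, 11, 2); (4, 11, 2); (1, 10, 1); (3, 10, 2); (5, 10, 2); (8, 9, 1); (6, 9, 1);
      (2, 9, 1); (4, 9, 2); (3, 8, 1); (7, 8, 1); (5, 8, 2); (8, 7, 1); (4, 7, 1); (6, 7, 2);
      (7, 6, 1); (5, 6, 2); (8, 5, 1); (4, 5, 1); (6, 5, 1); (3, 4, 1); (5, 4, 1); (2, 3, 1);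
      (4, 3, 1); (1, 2, 1); (3, 2, 1); (2, 1, 1)];
   [:: (3, 29, 1); (2, 28, 1); (4, 28, 1); (1, 27, 1); (3, 27, 1); (5, 27, 1); (2, 26, 1);
      (4, 26, 1); (6, 26, 1); (8, 26, 1); (3, 25, 1); (5, 25, 2); (7, 25, 1); (6, 24, 2);
      (8, 24, 1); (4, 24, 2); (3, 23, 1); (7, 23, 1); (5, 23, 3); (6, 22, 2); (8, 22, 2);
      (4, 22, 2); (2, 22, 1); (3, 21, 2); (7, 21, 1); (5, 21, 3); (1, 21, 1); (6, 20, 2);
      (8, 20, 1); (2, 20, 2); (4, 20, 3); (7, 19, 1); (1, 19, 1); (3, 19, 3); (5, 19, 3);
      (6, 18, 2); (8, 18, 2); (2, 18, 2); (4, 18, 3); (7, 17, 1); (1, 17, 1); (3, 17, 2);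
      (5, 17, 4); (6, 16, 3); (8, 16, 2); (2, 16, 1); (4, 16, 3); (7, 15, 2); (3, 15, 2);
      (5, 15, 4); (6, 14, 3); (8, 14, 2); (2, 14, 1); (4, 14, 3); (7, 13, 1); (3, 13, 2);
      (5, 13, 4); (1, 13, 1); (6, 12, 2); (8, 12, 2); (2, 12, 2); (4, 12, 3); (7, 11, 1);
      (1, 11, 1); (3, 11, 3); (5, 11, 3); (6, 10, 2); (8, 10, 1); (2, 10, 2); (4, 10, 3);
      (7, 9, 1); (1, 9, 1); (3, 9, 2); (5, 9, 3); (6, 8, 2); (8, 8, 2); (2, 8, 1); (4, 8, 2);
      (7, 7, 1); (3, 7, 1); (5, 7, 3); (6, 6, 2); (8, 6, 1); (4, 6, 2); (7, 5, 1); (3, 5, 1);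
      (5, 5, 2); (6, 4, 1); (8, 4, 1); (4, 4, 1); (2, 4, 1); (5, 3, 1); (1, 3, 1); (3, 3, 1);
      (2, 2, 1); (4, 2, 1); (3, 1, 1)];
   [:: (4, 29, 1); (3, 28, 1); (5, 28, 1); (2, 27, 1); (4, 27, 1); (6, 27, 1); (8, 27, 1);
      (1, 26, 1); (3, 26, 1); (5, 26, 2); (7, 26, 1); (6, 25, 2); (8, 25, 1); (2, 25, 1);
      (4, 25, 2); (7, 24, 1); (5, 24, 3); (3, 24, 2); (6, 23, 2); (8, 23, 2); (2, 23, 1);
      (4, 23, 3); (7, 22, 1); (5, 22, 4); (3, 22, 2); (1, 22, 1); (6, 21, 3); (8, 21, 2);
      (2, 21, 2); (4, 21, 3); (7, 20, 2); (5, 20, 4); (1, 20, 1); (3, 20, 3); (6, 19, 3);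
      (8, 19, 2); (2, 19, 2); (4, 19, 4); (7, 18, 1); (5, 18, 5); (1, 18, 1); (3, 18, 3);
      (6, 17, 3); (8, 17, 3); (2, 17, 2); (4, 17, 4); (7, 16, 2); (5, 16, 5); (1, 16, 1);
      (3, 16, 3); (6, 15, 4); (8, 15, 2); (2, 15, 2); (4, 15, 4); (7, 14, 2); (5, 14, 5);
      (1, 14, 1); (3, 14, 3); (6, 13, 3); (8, 13, 3); (2, 13, 2); (4, 13, 4); (7, 12, 1);
      (5, 12, 5); (1, 12, 1); (3, 12, 3); (6, 11, 3); (8, 11, 2); (2, 11, 2); (4, 11, 4);
      (7, 10, 2); (1, 10, 1); (3, 10, 3); (5, 10, 4); (6, 9, 3); (8, 9, 2); (2, 9, 2);
      (4, 9, 3); (7, 8, 1); (1, 8, 1); (3, 8, 2); (5, 8, 4); (6, 7, 2); (8, 7, 2); (2, 7, 1);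
      (4, 7, 3); (7, 6, 1); (3, 6, 2); (5, 6, 3); (6, 5, 2); (8, 5, 1); (2, 5, 1); (4, 5, 2);
      (7, 4, 1); (3, 4, 1); (1, 4, 1); (5, 4, 2); (6, 3, 1); (8, 3, 1); (4, 3, 1); (2, 3, 1);
      (5, 2, 1); (3, 2, 1); (4, 1, 1)];
   [:: (5, 29, 1); (4, 28, 1); (6, 28, 1); (8, 28, 1); (3, 27, 1); (5, 27, 2); (7, 27, 1);
      (6, 26, 2); (8, 26, 1); (2, 26, 1); (4, 26, 2); (7, 25, 1); (5, 25, 3); (1, 25, 1);
      (3, 25, 2); (6, 24, 2); (8, 24, 2); (4, 24, 3); (2, 24, 2); (7, 23, 1); (5, 23, 4);
      (1, 23, 1); (3, 23, 3); (6, 22, 3); (8, 22, 2); (4, 22, 4); (2, 22, 2); (7, 21, 2);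
      (5, 21, 5); (1, 21, 1); (3, 21, 3); (6, 20, 4); (8, 20, 3); (4, 20, 4); (2, 20, 2);
      (7, 19, 2); (5, 19, 6); (1, 19, 1); (3, 19, 3); (6, 18, 4); (8, 18, 3); (4, 18, 5);
      (2, 18, 2); (7, 17, 2); (5, 17, 6); (1, 17, 1); (3, 17, 4); (6, 16, 4); (8, 16, 3);
      (4, 16, 5); (2, 16, 3); (7, 15, 2); (5, 15, 6); (1, 15, 2); (3, 15, 4); (6, 14, 4);
      (8, 14, 3); (4, 14, 5); (2, 14, 3); (7, 13, 2); (5, 13, 6); (1, 13, 1); (3, 13, 4);
      (6, 12, 4); (8, 12, 3); (4, 12, 5); (2, 12, 2); (7, 11, 2); (5, 11, 6); (1, 11, 1);
      (3, 11, 3); (6, 10, 4); (8, 10, 3); (4, 10, 4); (2, 10, 2); (7, 9, 2); (5, 9, 5);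
      (1, 9, 1); (3, 9, 3); (6, 8, 3); (8, 8, 2); (4, 8, 4); (2, 8, 2); (7, 7, 1); (1, 7, 1);
      (3, 7, 3); (5, 7, 4); (6, 6, 2); (8, 6, 2); (4, 6, 3); (2, 6, 2); (7, 5, 1); (1, 5, 1);
      (5, 5, 3); (3, 5, 2); (6, 4, 2); (8, 4, 1); (2, 4, 1); (4, 4, 2); (7, 3, 1); (3, 3, 1);
      (5, 3, 2); (6, 2, 1); (8, 2, 1); (4, 2, 1); (5, 1, 1)];
   [:: (6, 29, 1); (5, 28, 1); (7, 28, 1); (4, 27, 1); (8, 27, 1); (6, 27, 1); (3, 26, 1);
      (5, 26, 2); (8, 25, 1); (6, 25, 1); (2, 25, 1); (4, 25, 2); (7, 24, 1); (1, 24, 1);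
      (3, 24, 2); (5, 24, 2); (8, 23, 1); (2, 23, 2); (4, 23, 2); (6, 23, 2); (7, 22, 1);
      (1, 22, 1); (5, 22, 3); (3, 22, 2); (8, 21, 2); (2, 21, 1); (4, 21, 3); (6, 21, 2);
      (7, 20, 1); (5, 20, 4); (3, 20, 2); (8, 19, 2); (2, 19, 1); (4, 19, 3); (6, 19, 3);
      (7, 18, 2); (5, 18, 4); (3, 18, 2); (1, 18, 1); (8, 17, 2); (2, 17, 2); (4, 17, 3);
      (6, 17, 3); (7, 16, 1); (5, 16, 4); (1, 16, 1); (3, 16, 3); (8, 15, 2); (2, 15, 2);
      (4, 15, 4); (6, 15, 2); (7, 14, 1); (5, 14, 4); (1, 14, 1); (3, 14, 3); (8, 13, 2);
      (2, 13, 2); (6, 13, 3); (4, 13, 3); (7, 12, 2); (5, 12, 4); (1, 12, 1); (3, 12, 2);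
      (8, 11, 2); (2, 11, 1); (6, 11, 3); (4, 11, 3); (7, 10, 1); (5, 10, 4); (3, 10, 2);
      (8, 9, 2); (2, 9, 1); (6, 9, 2); (4, 9, 3); (7, 8, 1); (3, 8, 2); (1, 8, 1); (5, 8, 3);
      (8, 7, 1); (2, 7, 2); (6, 7, 2); (4, 7, 2); (7, 6, 1); (1, 6, 1); (3, 6, 2); (5, 6, 2);
      (8, 5, 1); (2, 5, 1); (6, 5, 1); (4, 5, 2); (3, 4, 1); (5, 4, 2); (8, 3, 1); (6, 3, 1);
      (4, 3, 1); (7, 2, 1); (5, 2, 1); (6, 1, 1)];
   [:: (7, 29, 1); (6, 28, 1); (5, 27, 1); (4, 26, 1); (8, 26, 1); (3, 25, 1); (5, 25, 1);
      (2, 24, 1); (4, 24, 1); (6, 24, 1); (1, 23, 1); (3, 23, 1); (5, 23, 1); (7, 23, 1);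
      (2, 22, 1); (4, 22, 1); (8, 22, 1); (6, 22, 1); (3, 21, 1); (5, 21, 2); (8, 20, 1);
      (6, 20, 1); (4, 20, 2); (3, 19, 1); (7, 19, 1); (5, 19, 2); (8, 18, 1); (4, 18, 1);
      (2, 18, 1); (6, 18, 2); (7, 17, 1); (1, 17, 1); (3, 17, 1); (5, 17, 2); (8, 16, 1);
      (6, 16, 1); (2, 16, 1); (4, 16, 2); (3, 15, 2); (5, 15, 2); (8, 14, 1); (6, 14, 1);
      (2, 14, 1); (4, 14, 2); (3, 13, 1); (7, 13, 1); (1, 13, 1); (5, 13, 2); (8, 12, 1);
      (4, 12, 1); (2, 12, 1); (6, 12, 2); (7, 11, 1); (3, 11, 1); (5, 11, 2); (8, 10, 1);
      (6, 10, 1); (4, 10, 2); (3, 9, 1); (5, 9, 2); (8, 8, 1); (6, 8, 1); (4, 8, 1); (2, 8, 1);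
      (7, 7, 1); (5, 7, 1); (1, 7, 1); (3, 7, 1); (6, 6, 1); (2, 6, 1); (4, 6, 1); (3, 5, 1);
      (5, 5, 1); (4, 4, 1); (8, 4, 1); (5, 3, 1); (6, 2, 1); (7, 1, 1)];
   [:: (8, 29, 1); (5, 28, 1); (4, 27, 1); (6, 27, 1); (3, 26, 1); (5, 26, 1); (7, 26, 1);
      (2, 25, 1); (4, 25, 1); (8, 25, 1); (6, 25, 1); (1, 24, 1); (3, 24, 1); (5, 24, 2);
      (8, 23, 1); (6, 23, 1); (2, 23, 1); (4, 23, 2); (7, 22, 1); (3, 22, 2); (5, 22, 2);
      (8, 21, 1); (2, 21, 1); (4, 21, 2); (6, 21, 2); (7, 20, 1); (3, 20, 1); (5, 20, 3);
      (1, 20, 1); (8, 19, 2); (4, 19, 2); (6, 19, 2); (2, 19, 1); (7, 18, 1); (3, 18, 2);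
      (5, 18, 3); (8, 17, 1); (6, 17, 2); (2, 17, 1); (4, 17, 3); (7, 16, 1); (3, 16, 2);
      (1, 16, 1); (5, 16, 3); (8, 15, 2); (6, 15, 2); (2, 15, 2); (4, 15, 2); (7, 14, 1);
      (1, 14, 1); (5, 14, 3); (3, 14, 2); (8, 13, 1); (6, 13, 2); (2, 13, 1); (4, 13, 3);
      (7, 12, 1); (3, 12, 2); (5, 12, 3); (8, 11, 2); (6, 11, 2); (2, 11, 1); (4, 11, 2);
      (7, 10, 1); (3, 10, 1); (5, 10, 3); (1, 10, 1); (8, 9, 1); (6, 9, 2); (4, 9, 2);
      (2, 9, 1); (7, 8, 1); (3, 8, 2); (5, 8, 2); (8, 7, 1); (6, 7, 1); (2, 7, 1); (4, 7, 2);
      (3, 6, 1); (1, 6, 1); (5, 6, 2); (8, 5, 1); (6, 5, 1); (4, 5, 1); (2, 5, 1); (7, 4, 1);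
      (5, 4, 1); (3, 4, 1); (6, 3, 1); (4, 3, 1); (5, 2, 1); (8, 1, 1)]].

Definition F4_T_certificate : seq certificate :=
  [:: [:: (1, 16, 1); (2, 14, 1); (3, 13, 1); (2, 12, 1); (4, 12, 1); (3, 11, 1); (1, 10, 1);
      (2, 10, 1); (2, 8, 1); (1, 8, 1); (3, 7, 1); (2, 6, 1); (4, 6, 1); (3, 5, 1); (2, 4, 1);
      (1, 2, 1)];
   [:: (2, 16, 1); (3, 15, 1); (1, 14, 1); (2, 14, 1); (4, 14, 1); (3, 13, 1); (2, 12, 2);
      (1, 12, 1); (3, 11, 1); (1, 10, 1); (2, 10, 2); (4, 10, 1); (3, 9, 2); (1, 8, 1);
      (2, 8, 2); (4, 8, 1); (3, 7, 1); (1, 6, 1); (2, 6, 2); (3, 5, 1); (1, 4, 1); (2, 4, 1);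
      (4, 4, 1); (3, 3, 1); (2, 2, 1)];
   [:: (3, 17, 1); (2, 16, 1); (4, 16, 1); (3, 15, 1); (2, 14, 2); (1, 14, 1); (3, 13, 1);
      (1, 12, 2); (2, 12, 2); (4, 12, 1); (3, 11, 2); (2, 10, 3); (1, 10, 1); (4, 10, 1);
      (3, 9, 2); (1, 8, 1); (2, 8, 3); (4, 8, 1); (3, 7, 2); (1, 6, 2); (2, 6, 2); (4, 6, 1);
      (3, 5, 1); (1, 4, 1); (2, 4, 2); (3, 3, 1); (2, 2, 1); (4, 2, 1); (3, 1, 1)];
   [:: (4, 17, 1); (3, 16, 1); (2, 15, 1); (2, 13, 1); (1, 13, 1); (3, 12, 1); (1, 11, 1);
      (2, 11, 1); (4, 11, 1); (3, 10, 1); (2, 9, 2); (3, 8, 1); (1, 7, 1); (2, 7, 1);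
      (4, 7, 1); (3, 6, 1); (1, 5, 1); (2, 5, 1); (2, 3, 1); (3, 2, 1); (4, 1, 1)]].

Definition F4_Y_certificate : seq certificate :=
  [:: [:: (1, 16, 1); (2, 14, 1); (3, 14, 1); (2, 12, 1); (4, 13, 1); (3, 12, 2); (2, 10, 1);
      (1, 10, 1); (4, 11, 1); (3, 10, 1); (1, 8, 1); (2, 8, 1); (3, 8, 1); (2, 6, 1);
      (4, 7, 1); (3, 6, 2); (2, 4, 1); (4, 5, 1); (3, 4, 1); (1, 2, 1)];
   [:: (2, 16, 1); (3, 16, 1); (1, 14, 1); (2, 14, 1); (4, 15, 1); (3, 14, 2); (1, 12, 1);
      (2, 12, 2); (4, 13, 1); (3, 12, 2); (1, 10, 1); (2, 10, 2); (4, 11, 1); (3, 10, 3);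
      (1, 8, 1); (2, 8, 2); (4, 9, 2); (3, 8, 3); (1, 6, 1); (2, 6, 2); (4, 7, 1); (3, 6, 2);
      (1, 4, 1); (2, 4, 1); (4, 5, 1); (3, 4, 2); (2, 2, 1); (4, 3, 1); (3, 2, 1)];
   [:: (3, 17, 1); (2, 15, 1); (4, 16, 1); (3, 15, 1); (1, 13, 1); (2, 13, 1); (3, 13, 1);
      (1, 11, 1); (2, 11, 1); (4, 12, 1); (3, 11, 2); (2, 9, 2); (4, 10, 1); (3, 9, 2);
      (1, 7, 1); (2, 7, 1); (4, 8, 1); (3, 7, 2); (2, 5, 1); (1, 5, 1); (4, 6, 1); (3, 5, 1);
      (2, 3, 1); (3, 3, 1); (4, 2, 1); (3, 1, 1)];
   [:: (4, 17, 1); (3, 16, 1); (2, 14, 1); (1, 12, 1); (3, 12, 1); (2, 10, 1); (4, 11, 1);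
      (3, 10, 1); (2, 8, 1); (3, 8, 1); (1, 6, 1); (4, 7, 1); (3, 6, 1); (2, 4, 1); (3, 2, 1);
      (4, 1, 1)]].

Definition G2_T_certificate : seq certificate :=
  [:: [:: (1, 9, 1); (2, 8, 1); (1, 7, 1); (1, 5, 1); (2, 4, 1); (1, 3, 1)];
   [:: (2, 11, 1); (1, 10, 1); (1, 8, 1); (2, 7, 1); (1, 6, 2); (2, 5, 1); (1, 4, 1); (1, 2, 1);
      (2, 1, 1)]].

Definition G2_Y_certificate : seq certificate :=
  [:: [:: (1, 9, 1); (2, 10, 1); (1, 7, 1); (2, 8, 1); (1, 5, 1); (2, 6, 2); (1, 3, 1); (2, 4, 1);
      (2, 2, 1)];
   [:: (2, 11, 1); (1, 8, 1); (2, 7, 1); (1, 4, 1); (2, 5, 1); (2, 1, 1)]].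

Local Open Scope ring_scope.

Section ExceptionalRelations.
Variables (G : zmodType) (F : nat -> int -> G).

Lemma sl_relation_holds d : simply_laced_system d F ->
  forall b k, (1 <= b <= rank d)%N ->
    eval_terms F k (sl_relation d b).1 = eval_terms F k (sl_relation d b).2.
Proof.
move=> sysF b k b_in; rewrite /eval_terms /= !big_cons big_nil addr0 sysF //.
by rewrite big_map big_filter; apply: eq_bigr => b' _; rewrite addr0.
Qed.

Lemma F4_T_relation_holds : is_T_system TF4 F ->
  forall b k, (1 <= b <= 4)%N ->
    eval_terms F k (F4_T_relation b).1 = eval_terms F k (F4_T_relation b).2.
Proof.
move=> sysF b k b_in; have := sysF b k b_in; rewrite /T_rel /eval_terms.
by case: b b_in => [|[|[|[|[|b]]]]] //= _ rel_b;
  rewrite !big_cons !big_nil /= !addr0 ?addrA; apply: rel_b.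
Qed.

Lemma F4_Y_relation_holds : is_Y_system TF4 F ->
  forall b k, (1 <= b <= 4)%N ->
    eval_terms F k (F4_Y_relation b).1 = eval_terms F k (F4_Y_relation b).2.
Proof.
move=> sysF b k b_in; have := sysF b k b_in; rewrite /Y_rel /eval_terms.
by case: b b_in => [|[|[|[|[|b]]]]] //= _ rel_b;
  rewrite !big_cons !big_nil /= !addr0 ?addrA; apply: rel_b.
Qed.

Lemma G2_T_relation_holds : is_T_system TG2 F ->
  forall b k, (1 <= b <= 2)%N ->
    eval_terms F k (G2_T_relation b).1 = eval_terms F k (G2_T_relation b).2.
Proof.
move=> sysF b k b_in; have := sysF b k b_in; rewrite /T_rel /eval_terms.
by case: b b_in => [|[|[|b]]] //= _ rel_b;
  rewrite !big_cons !big_nil /= !addr0 ?addrA; apply: rel_b.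
Qed.

Lemma G2_Y_relation_holds : is_Y_system TG2 F ->
  forall b k, (1 <= b <= 2)%N ->
    eval_terms F k (G2_Y_relation b).1 = eval_terms F k (G2_Y_relation b).2.
Proof.
move=> sysF b k b_in; have := sysF b k b_in; rewrite /Y_rel /eval_terms.
by case: b b_in => [|[|[|b]]] //= _ rel_b;
  rewrite !big_cons !big_nil /= !addr0 ?addrA; apply: rel_b.
Qed.
End ExceptionalRelations.

Section ExceptionalHalfPeriods.
Variable G : zmodType.
Implicit Type F : nat -> int -> G.

Lemma E6_half_period F : simply_laced_system TE6 F -> half_periodic TE6 F.
Proof.
move=> /sl_relation_holds rel_F.
by apply: (@certificates_half_period _ _ TE6 _ rel_F E6_certificate); vm_compute.
Qed.

Lemma E7_half_period F : simply_laced_system TE7 F -> half_periodic TE7 F.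
Proof.
move=> /sl_relation_holds rel_F.
by apply: (@certificates_half_period _ _ TE7 _ rel_F E7_certificate); vm_compute.
Qed.

Lemma E8_half_period F : simply_laced_system TE8 F -> half_periodic TE8 F.
Proof.
move=> /sl_relation_holds rel_F.
by apply: (@certificates_half_period _ _ TE8 _ rel_F E8_certificate); vm_compute.
Qed.

Lemma F4_T_half_period F : is_T_system TF4 F -> half_periodic TF4 F.
Proof.
move=> /F4_T_relation_holds rel_F.
by apply: (@certificates_half_period _ _ TF4 _ rel_F F4_T_certificate); vm_compute.
Qed.

Lemma F4_Y_half_period F : is_Y_system TF4 F -> half_periodic TF4 F.
Proof.
move=> /F4_Y_relation_holds rel_F.
by apply: (@certificates_half_period _ _ TF4 _ rel_F F4_Y_certificate); vm_compute.
Qed.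

Lemma G2_T_half_period F : is_T_system TG2 F -> half_periodic TG2 F.
Proof.
move=> /G2_T_relation_holds rel_F.
by apply: (@certificates_half_period _ _ TG2 _ rel_F G2_T_certificate); vm_compute.
Qed.

Lemma G2_Y_half_period F : is_Y_system TG2 F -> half_periodic TG2 F.
Proof.
move=> /G2_Y_relation_holds rel_F.
by apply: (@certificates_half_period _ _ TG2 _ rel_F G2_Y_certificate); vm_compute.
Qed.
End ExceptionalHalfPeriods.

Lemma omega_node_involution d a : valid_dynkin d -> (1 <= a <= rank d)%N ->
  (1 <= omega d a <= rank d)%N /\ omega d (omega d a) = a.
Proof.
case: d => [r|r|r|r| | | | | ] /= valid_d a_in //.
- by split; lia.
- case: (odd r) => //; case: (a =P r.-1) => [->|ne_a1].
    by rewrite eqxx ifN; [split | ]; lia.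
  case: (a =P r) => [->|ne_a]; first by rewrite eqxx; split; lia.
  by rewrite (introF eqP ne_a1) (introF eqP ne_a).
- by case: a a_in => [|[|[|[|[|[|[|a]]]]]]].
Qed.

Lemma period_of_half_period (G : zmodType) d (F : nat -> int -> G) :
  valid_dynkin d -> half_periodic d F ->
  forall a k, (1 <= a <= rank d)%N -> F a (k + (2 * (tnum d * hdual d))%N%:Z) = F a k.
Proof.
move=> valid_d half_F a k a_in; have [omega_a omegaK] := omega_node_involution valid_d a_in.
by rewrite mul2n -addnn PoszD addrA !half_F // omegaK opprK.
Qed.

Section HalfPeriods.
Variables (G : zmodType) (d : Dynkin) (F : nat -> int -> G).
Hypothesis valid_d : valid_dynkin d.

Lemma T_half_period : is_T_system d F -> half_periodic d F.
Proof.
case: d valid_d => [[|r]|[|[|r]]|[|[|r]]|[|[|[|r]]]| | | | | ] //= _.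
- exact: A_half_period.
- exact: B_T_half_period.
- exact: C_T_half_period.
- exact: D_half_period.
- exact: E6_half_period.
- exact: E7_half_period.
- exact: E8_half_period.
- exact: F4_T_half_period.
- exact: G2_T_half_period.
Qed.

Lemma Y_half_period : is_Y_system d F -> half_periodic d F.
Proof.
case: d valid_d => [[|r]|[|[|r]]|[|[|r]]|[|[|[|r]]]| | | | | ] //= _.
- exact: A_half_period.
- exact: B_Y_half_period.
- exact: C_Y_half_period.
- exact: D_half_period.
- exact: E6_half_period.
- exact: E7_half_period.
- exact: E8_half_period.
- exact: F4_Y_half_period.
- exact: G2_Y_half_period.
Qed.
End HalfPeriods.

Unset Implicit Arguments.
Theorem theorem8p8 (d : Dynkin) (hd : valid_dynkin d) :
  (forall (G : zmodType) (T : nat -> int -> G), is_T_system d T ->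
     forall (a : nat) (k : int), (1 <= a <= rank d)%N ->
       T a (k + (tnum d * hdual d)%N%:Z) = - T (omega d a) k /\
       T a (k + (2 * (tnum d * hdual d))%N%:Z) = T a k) /\
  (forall (G : zmodType) (Y : nat -> int -> G), is_Y_system d Y ->
     forall (a : nat) (k : int), (1 <= a <= rank d)%N ->
       Y a (k + (tnum d * hdual d)%N%:Z) = - Y (omega d a) k /\
       Y a (k + (2 * (tnum d * hdual d))%N%:Z) = Y a k).
Proof.
split=> G F sysF a k a_in.
- have half_F := T_half_period hd sysF.
  by split; [exact: half_F | exact: period_of_half_period].
- have half_F := Y_half_period hd sysF.
  by split; [exact: half_F | exact: period_of_half_period].
Qed.
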